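(* Let $G$ be a group and $\mathcal{S}$ a 2-complex with vertices in $G$ such that $\mathcal{C}=Sc[\mathcal{S},G]$ is a commutative triplet structure. Then every edge of $\mathcal{C}$ has exactly two centers.
   Context: $\mathcal{S}(1)$ is the set of 2-sets contained in triangles of $\mathcal{S}$. For $\sigma\subseteq G$, $\sigma\cdot g=\{sg:s\in\sigma\}$; $Sc[\mathcal{S},G]=\{\sigma\cdot g:\sigma\in\mathcal{S},g\in G\}$. $\mathcal{T}=\mathcal{S}(1)$, $\mathcal{T}_o$ = ordered pairs $(t_1,t_2)$ with $\{t_1,t_2\}\in\mathcal{T}$. Commutative triplet structure: (0) $\{s,s^{-1}\}\notin\mathcal{T}$ for every vertex $s$; (A) every edge of $\mathcal{T}$ lies in exactly $\tilde d$ triangles of $\mathcal{S}$; (B) $ab=ba$ for $\{a,b\}\in\mathcal{T}$; (C) $\{a,b\}\in\mathcal{T}\iff\{a^{-1},b^{-1}\}\in\mathcal{T}$; (D) for $t\ne t'\in\mathcal{T}_o$, $t_1t_2^{-1}=t'_1(t'_2)^{-1}$ implies $t'_2=t_1^{-1}$, $t'_1=t_2^{-1}$; (E) the 1-skeleton of $\mathcal{S}$ is connected. For $\tau=\{a,b\}\in\mathcal{T}$ let $E(g,\tau)=\{ag,bg\}$. The edges of $\mathcal{C}$ are the sets $E(g,\tau)$; an element $c\in G$ is a center of an edge $w$ of $\mathcal{C}$ if $w=E(c,\tau)$ for some $\tau\in\mathcal{T}$. *)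

(* A general (possibly infinite) group is given by explicit
   operations and axioms; a 2-complex S with vertices in G is a ternary
   relation S x y z meaning "{x,y,z} is a triangle of S". *)
From Stdlib Require Import List Relations.
Import ListNotations.

Record group := Group {
  carrier :> Type;
  gmul : carrier -> carrier -> carrier;
  gone : carrier;
  ginv : carrier -> carrier;
  gmulA : forall x y z, gmul x (gmul y z) = gmul (gmul x y) z;
  gmul1l : forall x, gmul gone x = x;
  gmul1r : forall x, gmul x gone = x;
  gmulVl : forall x, gmul (ginv x) x = gone;
  gmulVr : forall x, gmul x (ginv x) = gone
}.

Section Complex.
Variable G : group.

Definition two_complex (S : G -> G -> G -> Prop) : Prop :=
  (forall x y z, S x y z -> x <> y /\ y <> z /\ x <> z) /\
  (forall x y z, S x y z -> S y x z) /\
  (forall x y z, S x y z -> S x z y).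

Definition edgeT (S : G -> G -> G -> Prop) (a b : G) : Prop :=
  a <> b /\ exists z, S a b z.

Definition vertex (S : G -> G -> G -> Prop) (v : G) : Prop :=
  exists y z, S v y z.

(* (0)-(E): S (equivalently Sc[S,G]) is a commutative triplet structure. *)
Definition comm_triplet_structure (S : G -> G -> G -> Prop) : Prop :=
  (* (0) *)
  (forall s, ~ edgeT S s (ginv G s)) /\
  (* (A) every edge of T lies in exactly dt triangles of S
         (triangles containing {a,b} <-> their third vertex z) *)
  (exists dt : nat, forall a b, edgeT S a b ->
      exists l : list G, length l = dt /\ NoDup l /\
        forall z, In z l <-> S a b z) /\
  (* (B) *)
  (forall a b, edgeT S a b -> gmul G a b = gmul G b a) /\
  (* (C) *)
  (forall a b, edgeT S a b <-> edgeT S (ginv G a) (ginv G b)) /\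
  (* (D) for distinct ordered pairs t, t' in T_o *)
  (forall t1 t2 u1 u2, edgeT S t1 t2 -> edgeT S u1 u2 ->
      (t1, t2) <> (u1, u2) ->
      gmul G t1 (ginv G t2) = gmul G u1 (ginv G u2) ->
      u2 = ginv G t1 /\ u1 = ginv G t2) /\
  (forall u v, vertex S u -> vertex S v ->
      clos_refl_trans G (edgeT S) u v).

(* The edge E(g,{a,b}) = {ag, bg} equals the 2-set {x,y}. *)
Definition edge_eq (S : G -> G -> G -> Prop) (g a b x y : G) : Prop :=
  (gmul G a g = x /\ gmul G b g = y) \/ (gmul G a g = y /\ gmul G b g = x).

Definition center (S : G -> G -> G -> Prop) (x y c : G) : Prop :=
  exists a b, edgeT S a b /\ edge_eq S c a b x y.

End Complex.

(* If {a'c, b'c} = {ag, bg} with {a',b'} an edge of S, then b' a'^-1 = b a^-1,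
   so by (D) either (a',b') = (a,b), giving c = g, or (a',b') = (b^-1,a^-1),
   giving c = b a g = a b g by (B).  Conversely {b^-1, a^-1} is an edge by (C),
   and the two centres differ because a b = 1 would make {a, a^-1} an edge,
   contradicting (0). *)
From Stdlib Require Import List Relations Classical.

Section GroupFacts.
Variable G : group.
Local Notation "x * y" := (gmul G x y).
Local Notation "x ^-1" := (ginv G x) (at level 3).

Lemma mul_cancel_l (a x y : G) : a * x = a * y -> x = y.
Proof.
  intro H.
  rewrite <- (gmul1l G x), <- (gmul1l G y), <- (gmulVl G a), <- !gmulA, H.
  reflexivity.
Qed.

Lemma mul_cancel_r (a x y : G) : x * a = y * a -> x = y.
Proof.
  intro H.
  rewrite <- (gmul1r G x), <- (gmul1r G y), <- (gmulVr G a), !gmulA, H.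
  reflexivity.
Qed.

Lemma inv_inv (a : G) : (a^-1)^-1 = a.
Proof. apply (mul_cancel_l (a^-1)). rewrite gmulVr, gmulVl. reflexivity. Qed.

Lemma mul_eq_inv_r (a b : G) : a * b = gone G -> b = a^-1.
Proof. intro H. apply (mul_cancel_l a). rewrite H, gmulVr. reflexivity. Qed.

Lemma mul_invKl (a x : G) : a^-1 * (a * x) = x.
Proof. rewrite gmulA, gmulVl, gmul1l. reflexivity. Qed.

End GroupFacts.

Section Centers.
Variable G : group.
Variable S : G -> G -> G -> Prop.
Local Notation "x * y" := (gmul G x y).
Local Notation "x ^-1" := (ginv G x) (at level 3).
Local Notation edge := (edgeT G S).

Hypothesis S_swap12 : forall x y z, S x y z -> S y x z.
Hypothesis no_edge_inv : forall s, ~ edge s s^-1.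
Hypothesis edge_comm : forall a b, edge a b -> a * b = b * a.
Hypothesis edge_inv : forall a b, edge a b <-> edge a^-1 b^-1.
Hypothesis edge_quotient_inj : forall t1 t2 u1 u2, edge t1 t2 -> edge u1 u2 ->
  (t1, t2) <> (u1, u2) -> t1 * t2^-1 = u1 * u2^-1 -> u2 = t1^-1 /\ u1 = t2^-1.

Lemma edge_sym (a b : G) : edge a b -> edge b a.
Proof. intros [Hab [z Hz]]. split; [congruence | exists z; auto]. Qed.

Lemma edge_inv_swap (a b : G) : edge a b -> edge b^-1 a^-1.
Proof. intro Hab. apply edge_sym, edge_inv. rewrite !inv_inv. exact Hab. Qed.

Lemma edge_quotient_eq (a b a' b' : G) : edge a b -> edge a' b' ->
  b' * a'^-1 = b * a^-1 -> (a' = a /\ b' = b) \/ (a' = b^-1 /\ b' = a^-1).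
Proof.
  intros Hab Ha'b' E.
  destruct (classic ((b, a) = (b', a'))) as [P | P].
  - left. injection P. intros -> ->. split; reflexivity.
  - right. apply (edge_quotient_inj b a b' a'); [apply edge_sym; assumption
      | apply edge_sym; assumption | exact P | symmetry; exact E].
Qed.

Lemma center_cases (g a b a' b' c : G) : edge a b -> edge a' b' ->
  a' * c = a * g -> b' * c = b * g -> c = g \/ c = (a * b) * g.
Proof.
  intros Hab Ha'b' E1 E2.
  assert (Ec : c = (a'^-1 * a) * g).
  { rewrite <- gmulA, <- E1, mul_invKl. reflexivity. }
  assert (Eq : b' * a'^-1 = b * a^-1).
  { apply (mul_cancel_r G (a * g)).
    rewrite <- !gmulA, mul_invKl, <- E2, Ec, <- gmulA. reflexivity. }
  destruct (edge_quotient_eq a b a' b' Hab Ha'b' Eq) as [[-> _] | [-> _]].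
  - left. rewrite Ec, gmulVl, gmul1l. reflexivity.
  - right. rewrite Ec, inv_inv, (edge_comm a b Hab). reflexivity.
Qed.

Lemma center_is_g_or_abg (g a b c : G) : edge a b ->
  center G S (a * g) (b * g) c -> c = g \/ c = (a * b) * g.
Proof.
  intros Hab [a' [b' [Ha'b' [[E1 E2] | [E1 E2]]]]].
  - exact (center_cases g a b a' b' c Hab Ha'b' E1 E2).
  - exact (center_cases g a b b' a' c Hab (edge_sym _ _ Ha'b') E2 E1).
Qed.

Lemma center_g (g a b : G) : edge a b -> center G S (a * g) (b * g) g.
Proof. intro Hab. exists a, b. split; [exact Hab | left; split; reflexivity]. Qed.

Lemma center_abg (g a b : G) : edge a b ->
  center G S (a * g) (b * g) ((a * b) * g).
Proof.
  intro Hab. exists b^-1, a^-1. split; [exact (edge_inv_swap a b Hab) |].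
  left. split.
  - rewrite (edge_comm a b Hab), <- gmulA, mul_invKl. reflexivity.
  - rewrite <- gmulA, mul_invKl. reflexivity.
Qed.

Lemma centers_distinct (g a b : G) : edge a b -> g <> (a * b) * g.
Proof.
  intros Hab E. apply (no_edge_inv a).
  rewrite <- (mul_eq_inv_r G a b); [exact Hab |].
  apply (mul_cancel_r G g). rewrite gmul1l. symmetry. exact E.
Qed.

End Centers.

Theorem mainTheorem6 (G : group) (S : G -> G -> G -> Prop) :
  two_complex G S ->
  comm_triplet_structure G S ->
  forall (g a b : G), edgeT G S a b ->
    let x := gmul G a g in
    let y := gmul G b g in
    exists c1 c2 : G, c1 <> c2 /\
      forall c : G, center G S x y c <-> (c = c1 \/ c = c2).
Proof.
  intros [_ [S_swap12 _]] [H0 [_ [HB [HC [HD _]]]]] g a b Hab x y.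
  exists g, (gmul G (gmul G a b) g). split.
  - exact (centers_distinct G S H0 g a b Hab).
  - intro c. split.
    + exact (center_is_g_or_abg G S S_swap12 HB HD g a b c Hab).
    + intros [-> | ->].
      * exact (center_g G S g a b Hab).
      * exact (center_abg G S S_swap12 HB HC g a b Hab).
Qed.
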